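(* In the Call-by-Value probabilistic $\lambda$-calculus (as defined in the context), for every multi-distribution $\mathbf m$ and every subdistribution $\mathbf r$: if $\mathbf m\Rightarrow^{\mathrm{obs}_{\mathrm{Nnf}}}\mathbf r$ then $\mathbf m\Rightarrow_E^{\mathrm{obs}_{\mathrm{Nnf}}}\mathbf r$.
   Context: Terms $\Lambda_\oplus$: $M::=x\mid\lambda x.M\mid MM\mid M\oplus M$; values $V::=x\mid\lambda x.M$. Contexts $C::=[\,]\mid MC\mid CM\mid\lambda x.C\mid C\oplus M\mid M\oplus C$; weak contexts $W::=[\,]\mid WM\mid MW$. A multi-distribution is a finite multiset $[p_iM_i]_{i\in I}$ with $p_i\in(0,1]$, $\sum_ip_i\le1$; $+$ is multiset union, $q\cdot[p_iM_i]_i=[(qp_i)M_i]_i$, $[M]:=[1M]$. $C[(\lambda x.M)V]\to_{\beta_v}[C[M\{V/x\}]]$; $W[M\oplus N]\to_\oplus[\tfrac12W[M],\tfrac12W[N]]$; $\to:=\to_{\beta_v}\cup\to_\oplus$; surface reduction $\to_s$ is $\to_\oplus$ together with the closure of $\beta_v$ under weak contexts. $M$ is $\to$-normal (surface-normal) if no $\mathbf m$ with $M\to\mathbf m$ ($M\to_s\mathbf m$); $\mathrm{Nnf}$ is the set of $\to$-normal terms. The lifting $\Rightarrow_r$ of a relation $r$ is the least relation with $[M]\Rightarrow_r[M]$; $[M]\Rightarrow_r\mathbf m$ if $M\,r\,\mathbf m$; $[p_iM_i]_{i\in I}\Rightarrow_r\sum_ip_i\cdot\mathbf m_i$ if $[M_i]\Rightarrow_r\mathbf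 m_i$ for all $i$. $\Rightarrow$ is the lifting of $\to$. Let $\rightsquigarrow_U$ be the unbiased iteration of weak $\beta_v$-reduction on $\Lambda_\oplus$: if $M\to_wM'$ (closure of $\beta_v$ under weak contexts) then $M\rightsquigarrow_UM'$; if $M$ is $\to_w$-normal: $\lambda x.P\rightsquigarrow_U\lambda x.P'$, $PQ\rightsquigarrow_UP'Q$, $PQ\rightsquigarrow_UPQ'$, $P\oplus Q\rightsquigarrow_UP'\oplus Q$, $P\oplus Q\rightsquigarrow_UP\oplus Q'$ whenever $P\rightsquigarrow_UP'$, resp. $Q\rightsquigarrow_UQ'$. $\rightsquigarrow_E$: if $M$ is not surface-normal and $M\to_s\mathbf m$ then $M\rightsquigarrow_E\mathbf m$; if $M$ is surface-normal and $M\rightsquigarrow_UM'$ then $M\rightsquigarrow_E[M']$; $\Rightarrow_E$ is its lifting. $\mathrm{obs}_{\mathrm{Nnf}}([p_iM_i]_{i\in I})$ is the subdistribution $\mu$ on $\mathrm{Nnf}$ with $\mu(N)=\sum_{i:\,M_i=N}p_i$; subdistributions are ordered pointwise (an $\omega$-cpo with least element the zero subdistribution). For a relation $R$ on multi-distributions, $\mathbf m\,R^{\mathrm{obs}_{\mathrm{Nnf}}}\,\mathbf r$ means there is a maximal $R$-sequence $(\mathbf m_n)_n$ from $\mathbf m$ (infinite, or finite ending in an $R$-normal element and then continued constantly) with $\sup_n\mathrm{obs}_{\mathrm{Nnf}}(\mathbf m_n)=\mathbf r$. *)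

From Stdlib Require Import Reals Lra List Permutation Arith ClassicalDescription.
Import ListNotations.
Open Scope R_scope.

(** * Terms of Λ⊕ (de Bruijn indices, i.e. terms up to α-equivalence) *)
Inductive term : Type :=
| Var : nat -> term
| Lam : term -> term
| App : term -> term -> term
| Choice : term -> term -> term.

Definition term_eq_dec : forall x y : term, {x = y} + {x <> y}.
Proof. decide equality; apply Nat.eq_dec. Defined.

Definition value (V : term) : Prop :=
  match V with Var _ | Lam _ => True | _ => False end.

Fixpoint shift (c : nat) (t : term) : term :=
  match t with
  | Var n => if Nat.ltb n c then Var n else Var (S n)
  | Lam t => Lam (shift (S c) t)
  | App t u => App (shift c t) (shift c u)
  | Choice t u => Choice (shift c t) (shift c u)
  end.

(** capture-avoiding substitution of s for index j (removing the binder) *)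
Fixpoint subst (j : nat) (s : term) (t : term) : term :=
  match t with
  | Var n => if Nat.eqb n j then s
             else if Nat.ltb j n then Var (pred n) else Var n
  | Lam t => Lam (subst (S j) (shift 0 s) t)
  | App t u => App (subst j s t) (subst j s u)
  | Choice t u => Choice (subst j s t) (subst j s u)
  end.

(** M{V/x} for the body M of λx.M *)
Definition subst0 (V M : term) : term := subst 0 V M.

Inductive ctx : Type :=
| Hole : ctx
| CAppR : term -> ctx -> ctx
| CAppL : ctx -> term -> ctx
| CLam : ctx -> ctx
| CChL : ctx -> term -> ctx
| CChR : term -> ctx -> ctx.

Fixpoint plug (C : ctx) (t : term) : term :=
  match C with
  | Hole => t
  | CAppR M C => App M (plug C t)
  | CAppL C M => App (plug C t) M
  | CLam C => Lam (plug C t)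
  | CChL C M => Choice (plug C t) M
  | CChR M C => Choice M (plug C t)
  end.

Fixpoint weak (C : ctx) : Prop :=
  match C with
  | Hole => True
  | CAppR _ C => weak C
  | CAppL C _ => weak C
  | _ => False
  end.

(** * Multi-distributions: finite multisets [p_i M_i], represented by lists
      (considered up to permutation). *)
Definition mdist := list (R * term).

Definition mass (m : mdist) : R := fold_right (fun pM acc => fst pM + acc) 0 m.

Definition is_mdist (m : mdist) : Prop :=
  Forall (fun pM => 0 < fst pM <= 1) m /\ mass m <= 1.

Definition dirac (M : term) : mdist := [(1, M)].

Definition scale (q : R) (m : mdist) : mdist :=
  map (fun pM => (q * fst pM, snd pM)) m.

Definition beta_ctx (P : ctx -> Prop) (M M' : term) : Prop :=
  exists C B V, P C /\ value V /\
    M = plug C (App (Lam B) V) /\ M' = plug C (subst0 V B).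

Definition step_beta (M : term) (m : mdist) : Prop :=
  exists M', beta_ctx (fun _ => True) M M' /\ m = dirac M'.

Definition step_oplus (M : term) (m : mdist) : Prop :=
  exists W P Q, weak W /\ M = plug W (Choice P Q) /\
    m = [(1/2, plug W P); (1/2, plug W Q)].

Definition step (M : term) (m : mdist) : Prop := step_beta M m \/ step_oplus M m.

Definition wstep (M M' : term) : Prop := beta_ctx weak M M'.

Definition sstep (M : term) (m : mdist) : Prop :=
  step_oplus M m \/ exists M', wstep M M' /\ m = dirac M'.

Definition normal (M : term) : Prop := forall m, ~ step M m.
Definition snormal (M : term) : Prop := forall m, ~ sstep M m.
Definition wnormal (M : term) : Prop := forall M', ~ wstep M M'.

Inductive stepU : term -> term -> Prop :=
| U_w M M' : wstep M M' -> stepU M M'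
| U_lam P P' : wnormal (Lam P) -> stepU P P' -> stepU (Lam P) (Lam P')
| U_appL P Q P' : wnormal (App P Q) -> stepU P P' -> stepU (App P Q) (App P' Q)
| U_appR P Q Q' : wnormal (App P Q) -> stepU Q Q' -> stepU (App P Q) (App P Q')
| U_chL P Q P' : wnormal (Choice P Q) -> stepU P P' ->
    stepU (Choice P Q) (Choice P' Q)
| U_chR P Q Q' : wnormal (Choice P Q) -> stepU Q Q' ->
    stepU (Choice P Q) (Choice P Q').

Inductive stepE : term -> mdist -> Prop :=
| E_s M m : ~ snormal M -> sstep M m -> stepE M m
| E_u M M' : snormal M -> stepU M M' -> stepE M (dirac M').

(** * Lifting of a relation r : term -> mdist -> Prop to multi-distributions
      (least relation; result taken up to permutation = multiset equality) *)
Inductive lift (r : term -> mdist -> Prop) : mdist -> mdist -> Prop :=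
| lift_refl M : lift r (dirac M) (dirac M)
| lift_step M m : r M m -> lift r (dirac M) m
| lift_sum (l : mdist) (ms : list mdist) (n : mdist) :
    Forall2 (fun pM mi => lift r (dirac (snd pM)) mi) l ms ->
    Permutation n (concat (map (fun pm => scale (fst (fst pm)) (snd pm))
                                 (combine l ms))) ->
    lift r l n.

Definition Rsteps := lift step.
Definition RstepsE := lift stepE.

Definition weight_of (m : mdist) (N : term) : R :=
  fold_right (fun pM acc => if term_eq_dec (snd pM) N then fst pM + acc else acc)
             0 m.

Definition obs_Nnf (m : mdist) (N : term) : R :=
  if excluded_middle_informative (normal N) then weight_of m N else 0.

Definition subdist (r : term -> R) : Prop :=
  (forall N, 0 <= r N) /\ (forall N, r N <> 0 -> normal N) /\
  (forall l, NoDup l -> fold_right Rplus 0 (map r l) <= 1).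

Definition maximal_seq (Rl : mdist -> mdist -> Prop) (m : mdist)
  (s : nat -> mdist) : Prop :=
  s 0%nat = m /\
  ((forall n, Rl (s n) (s (S n))) \/
   (exists k, (forall n, (n < k)%nat -> Rl (s n) (s (S n))) /\
              (forall m', ~ Rl (s k) m') /\
              (forall n, (k <= n)%nat -> s n = s k))).

Definition obs_lim (Rl : mdist -> mdist -> Prop) (m : mdist) (r : term -> R)
  : Prop :=
  exists s, maximal_seq Rl m s /\
    forall N, is_lub (fun x => exists n, x = obs_Nnf (s n) N) (r N).

(* A ⇒-sequence is simulated by ⇒_E through surface factorization of parallel
   reduction: M ⇛ N factors as M →w* L ⇛ᵢ N, where the internal parallel
   reduction ⇛ᵢ only reduces under λ and inside the branches of ⊕, and internal
   steps can be postponed after surface steps.  Hence every multi-distribution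
   reached by ⇒ is related, pointwise with equal weights and by ⇛ᵢ*, to one
   reached by surface steps.  A term related to a normal form N is surface normal
   and reaches N by unbiased steps, which ⇒_E allows; after this normalization
   the two multi-distributions carry the same weight on every normal form.
   Concatenating these finite ⇒_E-segments gives a ⇒_E-sequence whose
   observations are bounded by, and cofinal with, those of the ⇒-sequence, so
   both have the same supremum. *)

From Stdlib Require Import Reals Lra Lia List Permutation Arith Relations
  ClassicalEpsilon ClassicalDescription.
Import ListNotations.

Notation star R := (clos_refl_trans_1n _ R).

Lemma star_trans {A} (R : relation A) x y z : star R x y -> star R y z -> star R x z.
Proof.
  intros Hxy Hyz. apply clos_rt_rt1n. eapply rt_trans; apply clos_rt1n_rt; eassumption.
Qed.

Lemma star_map {A B} (R : relation A) (R' : relation B) (f : A -> B) :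
  (forall x y, R x y -> R' (f x) (f y)) -> forall x y, star R x y -> star R' (f x) (f y).
Proof. intros Hf x y H; induction H; econstructor; eauto. Qed.

Local Open Scope nat_scope.

Fixpoint occ (j : nat) (t : term) : nat :=
  match t with
  | Var n => if Nat.eqb n j then 1 else 0
  | Lam t => occ (S j) t
  | App t u | Choice t u => occ j t + occ j u
  end.

Ltac index_cases :=
  repeat (cbn [shift subst occ] in *; match goal with
  | |- context [Nat.ltb ?a ?b] => destruct (Nat.ltb_spec a b)
  | |- context [Nat.eqb ?a ?b] => destruct (Nat.eqb_spec a b)
  | |- context [Nat.leb ?a ?b] => destruct (Nat.leb_spec a b)
  end); cbn [shift subst occ] in *; try reflexivity; try (exfalso; lia); try (f_equal; lia).

Lemma shift_shift t c c' : c' <= c -> shift (S c) (shift c' t) = shift c' (shift c t).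
Proof.
  revert c c'; induction t; intros c c' H; simpl; try (f_equal; auto with arith; fail).
  index_cases.
Qed.

Lemma subst_shift t k v : subst k v (shift k t) = t.
Proof. revert k v; induction t; intros k v; simpl; try (f_equal; auto; fail). index_cases. Qed.

Lemma shift_subst_le t c j s : j <= c ->
  shift c (subst j s t) = subst j (shift c s) (shift (S c) t).
Proof.
  revert c j s; induction t; intros c j s H; simpl.
  - index_cases.
  - rewrite IHt, shift_shift by lia. reflexivity.
  - f_equal; auto.
  - f_equal; auto.
Qed.

Lemma shift_subst_ge t c j s : c <= j ->
  shift c (subst j s t) = subst (S j) (shift c s) (shift c t).
Proof.
  revert c j s; induction t; intros c j s H; simpl.
  - index_cases.
  - rewrite IHt, shift_shift by lia. reflexivity.
  - f_equal; auto.
  - f_equal; auto.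
Qed.

Lemma subst_subst t k j s v : k <= j ->
  subst j s (subst k v t) = subst k (subst j s v) (subst (S j) (shift k s) t).
Proof.
  revert k j s v; induction t; intros k j s v H; simpl.
  - destruct (Nat.eqb_spec n (S j)) as [->|]; index_cases.
    rewrite subst_shift. reflexivity.
  - rewrite IHt, shift_subst_ge, shift_shift by lia. reflexivity.
  - f_equal; auto.
  - f_equal; auto.
Qed.

Lemma occ_shift_lt t j c : j < c -> occ j (shift c t) = occ j t.
Proof. revert j c; induction t; intros j c H; simpl; auto with arith; index_cases. Qed.

Lemma occ_shift_ge t j c : c <= j -> occ (S j) (shift c t) = occ j t.
Proof. revert j c; induction t; intros j c H; simpl; auto with arith; index_cases. Qed.

Lemma occ_shift_self t c : occ c (shift c t) = 0.
Proof. revert c; induction t; intros c; simpl; rewrite ?IHt1, ?IHt2; auto; index_cases. Qed.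


Lemma occ_subst t k j s :
  occ j (subst k s t) = occ (if k <=? j then S j else j) t + occ k t * occ j s.
Proof.
  revert k j s; induction t; intros k j s; simpl.
  - destruct (Nat.leb_spec k j); index_cases.
  - rewrite IHt, occ_shift_ge by lia. index_cases.
  - rewrite IHt1, IHt2. lia.
  - rewrite IHt1, IHt2. lia.
Qed.

Lemma value_shift V c : value V -> value (shift c V).
Proof. destruct V; simpl; try tauto. destruct (Nat.ltb n c); simpl; tauto. Qed.

Lemma value_subst V j s : value V -> value s -> value (subst j s V).
Proof.
  destruct V; simpl; try tauto. intros _ Hs.
  destruct (Nat.eqb n j); auto. destruct (Nat.ltb j n); exact I.
Qed.

(** * Parallel reduction *)

(* The index bounds the length of the weak reduction extracted by [split_parn]:
   after contracting the redex of a [parn_beta] step, [parn_subst] leaves a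
   parallel reduction of strictly smaller index. *)
Inductive parn : nat -> term -> term -> Prop :=
| parn_var x : parn 0 (Var x) (Var x)
| parn_lam n M M' : parn n M M' -> parn n (Lam M) (Lam M')
| parn_app n k M M' N N' :
    parn n M M' -> parn k N N' -> parn (n + k) (App M N) (App M' N')
| parn_choice n k M M' N N' :
    parn n M M' -> parn k N N' -> parn (n + k) (Choice M N) (Choice M' N')
| parn_beta n k B B' V V' : parn n B B' -> parn k V V' -> value V ->
    parn (n + occ 0 B' * k + 1) (App (Lam B) V) (subst0 V' B').

Definition par M N := exists n, parn n M N.

Lemma par_refl t : par t t.
Proof.
  induction t as [x| t [n H]| t [n H] u [k K]| t [n H] u [k K]];
    eexists; constructor; eauto.
Qed.

Lemma par_lam M M' : par M M' -> par (Lam M) (Lam M').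
Proof. intros [n H]; eexists; constructor; eauto. Qed.

Lemma par_app M M' N N' : par M M' -> par N N' -> par (App M N) (App M' N').
Proof. intros [n H] [k K]; eexists; constructor; eauto. Qed.

Lemma par_choice M M' N N' : par M M' -> par N N' -> par (Choice M N) (Choice M' N').
Proof. intros [n H] [k K]; eexists; constructor; eauto. Qed.

Lemma par_beta B B' V V' : par B B' -> par V V' -> value V ->
  par (App (Lam B) V) (subst0 V' B').
Proof. intros [n H] [k K] HV; eexists; apply parn_beta; eauto. Qed.

Lemma parn_shift n M M' : parn n M M' -> forall c, parn n (shift c M) (shift c M').
Proof.
  induction 1; intros c; simpl; try (constructor; auto; fail).
  - destruct (Nat.ltb x c); constructor.
  - unfold subst0. rewrite shift_subst_le by lia.
    rewrite <- (occ_shift_lt B' 0 (S c)) by lia.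
    apply parn_beta; auto using value_shift.
Qed.

Lemma parn_subst n M M' : parn n M M' ->
  forall j k V V', parn k V V' -> value V ->
  exists n', n' <= n + occ j M' * k /\ parn n' (subst j V M) (subst j V' M').
Proof.
  induction 1; intros j kk W W' HW HVW; simpl.
  - destruct (Nat.eqb_spec x j).
    + exists kk. split; [lia | auto].
    + exists 0. split; [lia |]. destruct (Nat.ltb j x); constructor.
  - destruct (IHparn (S j) kk (shift 0 W) (shift 0 W')) as [n' [Hle Hp]];
      auto using parn_shift, value_shift.
    exists n'. split; [lia | constructor; auto].
  - destruct (IHparn1 j kk W W' HW HVW) as [n1 [H1 P1]].
    destruct (IHparn2 j kk W W' HW HVW) as [n2 [H2 P2]].
    exists (n1 + n2). split; [nia | constructor; auto].
  - destruct (IHparn1 j kk W W' HW HVW) as [n1 [H1 P1]].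
    destruct (IHparn2 j kk W W' HW HVW) as [n2 [H2 P2]].
    exists (n1 + n2). split; [nia | constructor; auto].
  - destruct (IHparn1 (S j) kk (shift 0 W) (shift 0 W')) as [n1 [Hl1 P1]];
      auto using parn_shift, value_shift.
    destruct (IHparn2 j kk W W' HW HVW) as [n2 [Hl2 P2]].
    pose proof (parn_beta _ _ _ _ _ _ P1 P2 (value_subst _ _ _ H1 HVW)) as PB.
    unfold subst0 in *. rewrite <- subst_subst in PB by lia.
    eexists; split; [| exact PB].
    rewrite !occ_subst, occ_shift_self. simpl.
    assert (occ 0 B' * n2 <= occ 0 B' * (k + occ j V' * kk)) by (apply Nat.mul_le_mono_l; lia).
    nia.
Qed.

(* Internal parallel reduction ⇛ᵢ: no redex in a weak context is contracted. *)
Inductive ipar : term -> term -> Prop :=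
| ipar_var x : ipar (Var x) (Var x)
| ipar_lam M M' : par M M' -> ipar (Lam M) (Lam M')
| ipar_app M M' N N' : ipar M M' -> ipar N N' -> ipar (App M N) (App M' N')
| ipar_choice M M' N N' : par M M' -> par N N' -> ipar (Choice M N) (Choice M' N').

Lemma ipar_refl t : ipar t t.
Proof. induction t; constructor; auto using par_refl. Qed.

Lemma ipar_par M N : ipar M N -> par M N.
Proof. induction 1; auto using par_refl, par_lam, par_app, par_choice. Qed.

Definition is_lam (t : term) : Prop := match t with Lam _ => True | _ => False end.

Lemma ipar_value M N : ipar M N -> (value M <-> value N).
Proof. destruct 1; simpl; tauto. Qed.

Lemma ipar_is_lam M N : ipar M N -> (is_lam M <-> is_lam N).
Proof. destruct 1; simpl; tauto. Qed.

(** * Surface factorization *)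

Inductive wred : term -> term -> Prop :=
| wred_beta B V : value V -> wred (App (Lam B) V) (subst0 V B)
| wred_appl M M' N : wred M M' -> wred (App M N) (App M' N)
| wred_appr M N N' : wred N N' -> wred (App M N) (App M N').

Inductive bred : term -> term -> Prop :=
| bred_beta B V : value V -> bred (App (Lam B) V) (subst0 V B)
| bred_appl M M' N : bred M M' -> bred (App M N) (App M' N)
| bred_appr M N N' : bred N N' -> bred (App M N) (App M N')
| bred_lam M M' : bred M M' -> bred (Lam M) (Lam M')
| bred_choicel M M' N : bred M M' -> bred (Choice M N) (Choice M' N)
| bred_choicer M N N' : bred N N' -> bred (Choice M N) (Choice M N').

(* [wchoice t a b]: t is W[P ⊕ Q] for a weak context W, with a = W[P], b = W[Q]. *)
Inductive wchoice : term -> term -> term -> Prop :=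
| wchoice_top P Q : wchoice (Choice P Q) P Q
| wchoice_appl M M1 M2 N : wchoice M M1 M2 -> wchoice (App M N) (App M1 N) (App M2 N)
| wchoice_appr M N N1 N2 : wchoice N N1 N2 -> wchoice (App M N) (App M N1) (App M N2).

Lemma wred_bred M N : wred M N -> bred M N.
Proof. induction 1; constructor; auto. Qed.

Lemma bred_par M N : bred M N -> par M N.
Proof.
  induction 1; auto using par_refl, par_lam, par_app, par_choice, par_beta.
Qed.

Lemma bred_weak_or_internal M N : bred M N -> wred M N \/ ipar M N.
Proof.
  induction 1 as [| ? ? ? _ [] | ? ? ? _ [] | | |];
    auto using wred, ipar, ipar_refl, par_refl, bred_par.
Qed.

Lemma wred_star_appl M M' N : star wred M M' -> star wred (App M N) (App M' N).
Proof. apply (star_map _ _ (fun x => App x N)); constructor; auto. Qed.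

Lemma wred_star_appr M N N' : star wred N N' -> star wred (App M N) (App M N').
Proof. apply (star_map _ _ (fun x => App M x)); constructor; auto. Qed.

Lemma split_parn n M N : parn n M N -> exists L, star wred M L /\ ipar L N.
Proof.
  revert M N; induction n as [n IHn] using lt_wf_ind; intros M N H.
  induction H.
  - exists (Var x); split; constructor.
  - exists (Lam M); split; constructor. exists n; auto.
  - destruct IHparn1 as [L1 [S1 P1]]; [intros m Hm; apply IHn; lia |].
    destruct IHparn2 as [L2 [S2 P2]]; [intros m Hm; apply IHn; lia |].
    exists (App L1 L2). split; [| constructor; auto].
    eapply star_trans; [apply wred_star_appl | apply wred_star_appr]; eauto.
  - exists (Choice M N). split; constructor; eexists; eauto.
  - destruct (parn_subst _ _ _ H 0 _ _ _ H0 H1) as [n' [Hle Hp]].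
    destruct (IHn n' ltac:(lia) _ _ Hp) as [L [SL PL]].
    exists L. split; auto. econstructor; [apply wred_beta |]; eauto.
Qed.

Lemma split_par M N : par M N -> exists L, star wred M L /\ ipar L N.
Proof. intros [n H]; eapply split_parn; eauto. Qed.

Lemma ipar_wred_swap N N' : wred N N' ->
  forall T, ipar T N -> exists T', wred T T' /\ par T' N'.
Proof.
  induction 1; intros T Hp; inversion Hp as [| |T1 T1' T2 T2' H1 H2|]; subst.
  - inversion H1 as [|B0 B1 [k HB]| |]; subst.
    destruct (ipar_par _ _ H2) as [kv HV].
    assert (HV0 : value T2) by (apply (ipar_value _ _ H2); auto).
    destruct (parn_subst _ _ _ HB 0 _ _ _ HV HV0) as [n' [_ Hs]].
    eexists; split; [apply wred_beta; auto | exists n'; exact Hs].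
  - destruct (IHwred _ H1) as [x [Hx Px]].
    eexists; split; [apply wred_appl; eauto | apply par_app; auto using ipar_par].
  - destruct (IHwred _ H2) as [x [Hx Px]].
    eexists; split; [apply wred_appr; eauto | apply par_app; auto using ipar_par].
Qed.

Lemma ipar_wred_postpone N P : star wred N P ->
  forall M, ipar M N -> exists M', star wred M M' /\ ipar M' P.
Proof.
  induction 1 as [| N N1 P HN _ IH]; intros M HM.
  - exists M; split; [constructor | auto].
  - destruct (ipar_wred_swap _ _ HN _ HM) as [M1 [HM1 PM1]].
    destruct (split_par _ _ PM1) as [L [SL PL]].
    destruct (IH _ PL) as [M' [S' P']].
    exists M'; split; auto. econstructor; eauto using star_trans.
Qed.

Lemma par_star_split M N : star par M N -> exists L, star wred M L /\ star ipar L N.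
Proof.
  induction 1 as [| M M1 N HM _ [L1 [S1 P1]]].
  - exists x; split; constructor.
  - destruct (split_par _ _ HM) as [L0 [S0 P0]].
    destruct (ipar_wred_postpone _ _ S1 _ P0) as [L [SL PL]].
    exists L; split; [eapply star_trans; eauto | econstructor; eauto].
Qed.

Lemma wchoice_ipar N N1 N2 : wchoice N N1 N2 -> forall T, ipar T N ->
  exists T1 T2, wchoice T T1 T2 /\ par T1 N1 /\ par T2 N2.
Proof.
  induction 1; intros T Hp; inversion Hp as [| |T1 T1' T2 T2' H1 H2|T1 T1' T2 T2' H1 H2]; subst.
  - exists T1, T2; repeat split; auto. constructor.
  - destruct (IHwchoice _ H1) as [x [y [O [Px Py]]]].
    exists (App x T2), (App y T2). repeat split; auto using wchoice, par_app, ipar_par.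
  - destruct (IHwchoice _ H2) as [x [y [O [Px Py]]]].
    exists (App T1 x), (App T1 y). repeat split; auto using wchoice, par_app, ipar_par.
Qed.

Fixpoint wnf (t : term) : Prop :=
  match t with
  | App a b => wnf a /\ wnf b /\ ~ (is_lam a /\ value b)
  | _ => True
  end.

Fixpoint snf (t : term) : Prop :=
  match t with
  | App a b => snf a /\ snf b /\ ~ (is_lam a /\ value b)
  | Choice _ _ => False
  | _ => True
  end.

Fixpoint bnf (t : term) : Prop :=
  match t with
  | Var _ => True
  | Lam a => bnf a
  | App a b => bnf a /\ bnf b /\ ~ (is_lam a /\ value b)
  | Choice a b => bnf a /\ bnf b
  end.

Lemma snf_wnf t : snf t -> wnf t.
Proof. induction t; simpl; tauto. Qed.

Lemma bnf_wnf t : bnf t -> wnf t.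
Proof. induction t; simpl; tauto. Qed.

Lemma wnf_iff t : wnf t <-> forall t', ~ wred t t'.
Proof.
  induction t as [| | t1 IH1 t2 IH2 |]; simpl; split; intros H;
    try (intros t' W; inversion W; fail); auto.
  - destruct H as [H1 [H2 H3]]. intros t' W. inversion W; subst.
    + apply H3; simpl; auto.
    + eapply IH1; eauto.
    + eapply IH2; eauto.
  - repeat split.
    + apply IH1. intros t' W. eapply H. apply wred_appl; eauto.
    + apply IH2. intros t' W. eapply H. apply wred_appr; eauto.
    + intros [HL HV]. destruct t1; simpl in HL; try tauto. eapply H. apply wred_beta; auto.
Qed.

Lemma snf_iff t : snf t <-> (forall t', ~ wred t t') /\ (forall a b, ~ wchoice t a b).
Proof.
  induction t as [| | t1 IH1 t2 IH2 |]; simpl; split; intros H.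
  - split; intros; intro W; inversion W.
  - auto.
  - split; intros; intro W; inversion W.
  - auto.
  - destruct H as [H1%IH1 [H2%IH2 H3]]. split.
    + intros t' W. inversion W; subst.
      * apply H3; simpl; auto.
      * eapply (proj1 H1); eauto.
      * eapply (proj1 H2); eauto.
    + intros a b O. inversion O; subst.
      * eapply (proj2 H1); eauto.
      * eapply (proj2 H2); eauto.
  - destruct H as [HW HO]. repeat split.
    + apply IH1. split.
      * intros t' W. eapply HW. apply wred_appl; eauto.
      * intros a b O. eapply HO. apply wchoice_appl; eauto.
    + apply IH2. split.
      * intros t' W. eapply HW. apply wred_appr; eauto.
      * intros a b O. eapply HO. apply wchoice_appr; eauto.
    + intros [HL HV]. destruct t1; simpl in HL; try tauto. eapply HW. apply wred_beta; auto.
  - contradiction.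
  - destruct H as [_ HO]. eapply HO. constructor.
Qed.

Lemma ipar_wnf M N : ipar M N -> (wnf M <-> wnf N).
Proof.
  induction 1; simpl; try tauto.
  rewrite IHipar1, IHipar2, (ipar_is_lam _ _ H), (ipar_value _ _ H0). tauto.
Qed.

Lemma ipar_snf M N : ipar M N -> (snf M <-> snf N).
Proof.
  induction 1; simpl; try tauto.
  rewrite IHipar1, IHipar2, (ipar_is_lam _ _ H), (ipar_value _ _ H0). tauto.
Qed.

Lemma star_ipar_wnf M N : star ipar M N -> (wnf M <-> wnf N).
Proof. induction 1; [tauto |]. rewrite (ipar_wnf _ _ H). auto. Qed.

Lemma star_ipar_snf M N : star ipar M N -> (snf M <-> snf N).
Proof. induction 1; [tauto |]. rewrite (ipar_snf _ _ H). auto. Qed.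

Lemma bnf_or_bred t : bnf t \/ exists t', bred t t'.
Proof.
  induction t as [| t [H|[t' H]] | t1 [H1|[u1 H1]] t2 [H2|[u2 H2]] | t1 [H1|[u1 H1]] t2 [H2|[u2 H2]]];
    simpl; eauto using bred.
  destruct t1; simpl; try tauto.
  destruct t2; simpl; try tauto; right; eexists; apply bred_beta; exact I.
Qed.

Lemma parn_bnf n M N : parn n M N -> bnf M -> N = M.
Proof.
  induction 1; simpl; intros Hb; f_equal; tauto.
Qed.

Lemma star_ipar_bnf M N : star ipar M N -> bnf M -> N = M.
Proof.
  induction 1 as [| M M1 N HM _ IH]; intros Hb; auto.
  destruct (ipar_par _ _ HM) as [n Hn].
  rewrite (parn_bnf _ _ _ Hn Hb) in IH. auto.
Qed.

Local Open Scope R_scope.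

Lemma wstep_iff M N : wstep M N <-> wred M N.
Proof.
  split.
  - intros [C [B [V [HW [HV [-> ->]]]]]].
    induction C; simpl in *; try contradiction; constructor; auto.
  - induction 1 as [B V HV| M M' N _ [C [B [V [HW [HV [-> ->]]]]]]
                  | M N N' _ [C [B [V [HW [HV [-> ->]]]]]]].
    + exists Hole, B, V; simpl; auto.
    + exists (CAppL C N), B, V; simpl; auto.
    + exists (CAppR M C), B, V; simpl; auto.
Qed.

Lemma step_beta_iff M m : step_beta M m <-> exists N, bred M N /\ m = dirac N.
Proof.
  enough (E : forall N, beta_ctx (fun _ => True) M N <-> bred M N).
  { split; intros [N [H1 H2]]; exists N; split; auto; apply E; auto. }
  intros N; split.
  - intros [C [B [V [_ [HV [-> ->]]]]]]. induction C; simpl; constructor; auto.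
  - induction 1; try (destruct IHbred as [C [B0 [V0 [_ [HV [-> ->]]]]]]).
    + exists Hole, B, V; simpl; auto.
    + exists (CAppL C N), B0, V0; simpl; auto.
    + exists (CAppR M C), B0, V0; simpl; auto.
    + exists (CLam C), B0, V0; simpl; auto.
    + exists (CChL C N), B0, V0; simpl; auto.
    + exists (CChR M C), B0, V0; simpl; auto.
Qed.

Lemma step_oplus_iff M m :
  step_oplus M m <-> exists a b, wchoice M a b /\ m = [(1/2, a); (1/2, b)].
Proof.
  split.
  - intros [W [P [Q [HW [-> ->]]]]]. exists (plug W P), (plug W Q); split; auto.
    induction W; simpl in *; try contradiction; constructor; auto.
  - intros [a [b [O ->]]]. induction O as [P Q| M a b N _ IH| M N a b _ IH].
    + exists Hole, P, Q; simpl; auto.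
    + destruct IH as [W [P [Q [HW [-> E]]]]]. injection E as -> ->.
      exists (CAppL W N), P, Q; simpl; auto.
    + destruct IH as [W [P [Q [HW [-> E]]]]]. injection E as -> ->.
      exists (CAppR M W), P, Q; simpl; auto.
Qed.

Lemma sstep_iff M m : sstep M m <->
  (exists a b, wchoice M a b /\ m = [(1/2, a); (1/2, b)]) \/
  (exists N, wred M N /\ m = dirac N).
Proof.
  unfold sstep. rewrite step_oplus_iff.
  split; intros [H|[N [H1 H2]]]; auto; right; exists N; split; auto; apply wstep_iff; auto.
Qed.

Lemma wnormal_iff M : wnormal M <-> wnf M.
Proof.
  rewrite wnf_iff. unfold wnormal.
  split; intros H N W; apply (H N); apply wstep_iff; auto.
Qed.

Lemma snormal_iff M : snormal M <-> snf M.
Proof.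
  rewrite snf_iff. unfold snormal. split.
  - intros H. split.
    + intros N W. apply (H (dirac N)). apply sstep_iff. eauto.
    + intros a b O. apply (H [(1/2, a); (1/2, b)]). apply sstep_iff. eauto.
  - intros [H1 H2] m [[a [b [O _]]]|[N [W _]]]%sstep_iff; [eapply H2 | eapply H1]; eauto.
Qed.

Lemma sstep_step M m : sstep M m -> step M m.
Proof.
  intros [[a [b [O ->]]]|[N [W ->]]]%sstep_iff.
  - right. apply step_oplus_iff; eauto.
  - left. apply step_beta_iff. eauto using wred_bred.
Qed.

Lemma normal_bnf N : normal N -> bnf N.
Proof.
  intros H. destruct (bnf_or_bred N) as [B|[N' Hb]]; auto.
  exfalso. apply (H (dirac N')). left. apply step_beta_iff. eauto.
Qed.

Lemma normal_snf N : normal N -> snf N.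
Proof. intros H. apply snormal_iff. intros m S. apply (H m), sstep_step, S. Qed.

Lemma stepU_bred M N : stepU M N -> bred M N.
Proof. induction 1; try (constructor; auto; fail). apply wred_bred, wstep_iff; auto. Qed.

Lemma stepU_ipar M N : stepU M N -> wnf M -> ipar M N.
Proof.
  induction 1; intros Hw; simpl in Hw.
  - exfalso. apply (proj1 (wnf_iff _) Hw M'). apply wstep_iff; auto.
  - constructor. apply bred_par, stepU_bred; auto.
  - constructor; [apply IHstepU; tauto | apply ipar_refl].
  - constructor; [apply ipar_refl | apply IHstepU; tauto].
  - constructor; [apply bred_par, stepU_bred; auto | apply par_refl].
  - constructor; [apply par_refl | apply bred_par, stepU_bred; auto].
Qed.

Lemma stepE_step M m : stepE M m -> step M m.
Proof.
  destruct 1 as [M m _ S| M N _ U]; auto using sstep_step.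
  left. apply step_beta_iff. eauto using stepU_bred.
Qed.

Lemma sstep_stepE M m : sstep M m -> stepE M m.
Proof. intros S. apply E_s; auto. intros H. apply (H m S). Qed.

Lemma star_ipar_par M N : star ipar M N -> star par M N.
Proof. apply (star_map _ _ (fun x => x)). exact ipar_par. Qed.

Lemma star_wred_stepU M N : star wred M N -> star stepU M N.
Proof.
  induction 1; econstructor; eauto. apply U_w, wstep_iff; auto.
Qed.

Lemma star_ipar_var M x : star ipar M (Var x) -> M = Var x.
Proof.
  intros H; remember (Var x) as X eqn:E; revert E.
  induction H; intros ->; auto. rewrite IHclos_refl_trans_1n in H; auto. inversion H; auto.
Qed.

Lemma star_ipar_lam M N : star ipar M (Lam N) -> exists Q, M = Lam Q /\ star par Q N.
Proof.
  intros H; remember (Lam N) as X eqn:E; revert N E.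
  induction H; intros N ->.
  - eexists; split; eauto. constructor.
  - destruct (IHclos_refl_trans_1n _ eq_refl) as [Q [-> S]]. inversion H; subst.
    eexists; split; eauto. econstructor; eauto.
Qed.

Lemma star_ipar_app M N1 N2 : star ipar M (App N1 N2) ->
  exists A B, M = App A B /\ star ipar A N1 /\ star ipar B N2.
Proof.
  intros H; remember (App N1 N2) as X eqn:E; revert N1 N2 E.
  induction H; intros N1 N2 ->.
  - do 2 eexists; split; eauto. split; constructor.
  - destruct (IHclos_refl_trans_1n _ _ eq_refl) as [A [B [-> [S1 S2]]]]. inversion H; subst.
    do 2 eexists; split; eauto. split; econstructor; eauto.
Qed.

Lemma star_ipar_choice M N1 N2 : star ipar M (Choice N1 N2) ->
  exists A B, M = Choice A B /\ star par A N1 /\ star par B N2.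
Proof.
  intros H; remember (Choice N1 N2) as X eqn:E; revert N1 N2 E.
  induction H; intros N1 N2 ->.
  - do 2 eexists; split; eauto. split; constructor.
  - destruct (IHclos_refl_trans_1n _ _ eq_refl) as [A [B [-> [S1 S2]]]]. inversion H; subst.
    do 2 eexists; split; eauto. split; econstructor; eauto.
Qed.

Lemma star_stepU_lam Q Q' : star stepU Q Q' -> star stepU (Lam Q) (Lam Q').
Proof.
  apply (star_map _ _ Lam). intros. apply U_lam; auto. apply wnormal_iff; simpl; auto.
Qed.

Lemma star_stepU_choicel P P' Q : star stepU P P' -> star stepU (Choice P Q) (Choice P' Q).
Proof.
  apply (star_map _ _ (fun x => Choice x Q)). intros.
  apply U_chL; auto. apply wnormal_iff; simpl; auto.
Qed.

Lemma star_stepU_choicer P Q Q' : star stepU Q Q' -> star stepU (Choice P Q) (Choice P Q').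
Proof.
  apply (star_map _ _ (fun x => Choice P x)). intros.
  apply U_chR; auto. apply wnormal_iff; simpl; auto.
Qed.

Lemma star_stepU_appl A A' B : star stepU A A' -> wnf (App A B) ->
  star stepU (App A B) (App A' B).
Proof.
  induction 1 as [| A A1 A' HA _ IH]; intros Hw; [constructor |].
  assert (HA1 : ipar A A1) by (apply stepU_ipar; simpl in Hw; tauto).
  econstructor; [apply U_appL with (P' := A1); [apply wnormal_iff |]; auto |].
  apply IH. apply (ipar_wnf (App A B)); auto using ipar, ipar_refl.
Qed.

Lemma star_stepU_appr A B B' : star stepU B B' -> wnf (App A B) ->
  star stepU (App A B) (App A B').
Proof.
  induction 1 as [| B B1 B' HB _ IH]; intros Hw; [constructor |].
  assert (HB1 : ipar B B1) by (apply stepU_ipar; simpl in Hw; tauto).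
  econstructor; [apply U_appR with (Q' := B1); [apply wnormal_iff |]; auto |].
  apply IH. apply (ipar_wnf (App A B)); auto using ipar, ipar_refl.
Qed.

Lemma star_par_bnf_stepU N : bnf N -> forall M, star par M N -> star stepU M N.
Proof.
  induction N as [x| N IH| N1 IH1 N2 IH2| N1 IH1 N2 IH2]; simpl;
    intros Hb M HM; destruct (par_star_split _ _ HM) as [L [SW SP]];
    apply star_trans with L; auto using star_wred_stepU.
  - rewrite (star_ipar_var _ _ SP). constructor.
  - destruct (star_ipar_lam _ _ SP) as [Q [-> S]]. auto using star_stepU_lam.
  - destruct (star_ipar_app _ _ _ SP) as [A [B [-> [S1 S2]]]].
    assert (HwL : wnf (App A B)).
    { apply (star_ipar_wnf _ _ SP), bnf_wnf. simpl; auto. }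
    apply star_trans with (App N1 B).
    + apply star_stepU_appl; auto. apply IH1; [tauto | apply star_ipar_par; auto].
    + apply star_stepU_appr.
      * apply IH2; [tauto | apply star_ipar_par; auto].
      * apply (star_ipar_wnf (App A B)); auto.
        apply (star_map ipar ipar (fun x => App x B)); auto using ipar, ipar_refl.
  - destruct (star_ipar_choice _ _ _ SP) as [A [B [-> [S1 S2]]]].
    apply star_trans with (Choice N1 B).
    + apply star_stepU_choicel, IH1; tauto.
    + apply star_stepU_choicer, IH2; tauto.
Qed.

(* Surface-normal terms stay surface normal along ~>U, so each of these steps
   is a ~>E step. *)
Lemma star_ipar_normal_stepU M N : star ipar M N -> normal N ->
  star (fun a b => snf a /\ stepU a b) M N.
Proof.
  intros SP HN.
  assert (HM : snf M) by (apply (star_ipar_snf _ _ SP), normal_snf; auto).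
  assert (SU : star stepU M N).
  { apply star_par_bnf_stepU; auto using normal_bnf, star_ipar_par. }
  clear SP HN. induction SU as [| a b c HU _ IH]; [constructor |].
  econstructor; [split; eauto |]. apply IH.
  apply (ipar_snf _ _ (stepU_ipar _ _ HU (snf_wnf _ HM))); auto.
Qed.

(** * Lifting to multi-distributions *)

Definition refl_step (r : term -> mdist -> Prop) (M : term) (m : mdist) : Prop :=
  m = dirac M \/ r M m.

Definition mix (l : mdist) (ms : list mdist) : mdist :=
  concat (map (fun pm => scale (fst (fst pm)) (snd pm)) (combine l ms)).

Definition lift_flat (r : term -> mdist -> Prop) (l n : mdist) : Prop :=
  exists ms, Forall2 (fun pM mi => refl_step r (snd pM) mi) l ms /\ Permutation n (mix l ms).

Lemma mix_cons x l m ms : mix (x :: l) (m :: ms) = scale (fst x) m ++ mix l ms.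
Proof. reflexivity. Qed.

Lemma mix_app l1 ms1 l2 ms2 : length l1 = length ms1 ->
  mix (l1 ++ l2) (ms1 ++ ms2) = mix l1 ms1 ++ mix l2 ms2.
Proof.
  revert ms1; induction l1; intros [|m ms1] H; simpl in *; try discriminate; auto.
  rewrite !mix_cons, IHl1, app_assoc by lia. reflexivity.
Qed.

Lemma scale_1 m : scale 1 m = m.
Proof. induction m as [|[p M] m IH]; simpl; auto. rewrite IH, Rmult_1_l. auto. Qed.

Lemma scale_dirac p M : scale p (dirac M) = [(p, M)].
Proof. unfold scale, dirac; simpl. rewrite Rmult_1_r. auto. Qed.

Lemma scale_app p a b : scale p (a ++ b) = scale p a ++ scale p b.
Proof. apply map_app. Qed.

Lemma scale_scale p q m : scale p (scale q m) = scale (p * q) m.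
Proof. induction m as [|[x M] m IH]; simpl; auto. rewrite IH, Rmult_assoc. auto. Qed.

Lemma mix_scale p l ms : mix (scale p l) ms = scale p (mix l ms).
Proof.
  revert ms; induction l; intros [|m ms]; try reflexivity.
  change (scale p (a :: l)) with ((p * fst a, snd a) :: scale p l).
  rewrite !mix_cons, IHl, scale_app, scale_scale. auto.
Qed.

Lemma mix_perm ms ms' : Forall2 (@Permutation _) ms ms' ->
  forall l : mdist, length l = length ms -> Permutation (mix l ms) (mix l ms').
Proof.
  induction 1; intros [|pM d] Hl; simpl in *; try discriminate; auto.
  rewrite !mix_cons. apply Permutation_app; auto. apply Permutation_map; auto.
Qed.

Lemma mix_dirac (l : mdist) : mix l (map (fun pM => dirac (snd pM)) l) = l.
Proof.
  induction l as [|[p M] l IH]; auto.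
  simpl map. rewrite mix_cons, IH. simpl. rewrite Rmult_1_r. auto.
Qed.

Section LiftInd.
Variables (r : term -> mdist -> Prop) (P : mdist -> mdist -> Prop).
Hypothesis P_refl : forall M, P (dirac M) (dirac M).
Hypothesis P_step : forall M m, r M m -> P (dirac M) m.
Hypothesis P_sum : forall l ms n,
  Forall2 (fun pM mi => lift r (dirac (snd pM)) mi /\ P (dirac (snd pM)) mi) l ms ->
  Permutation n (mix l ms) -> P l n.

(* The generated principle of [lift] ignores its occurrences nested in [Forall2]. *)
Fixpoint lift_ind_nested l n (H : lift r l n) {struct H} : P l n :=
  match H in lift _ l n return P l n with
  | lift_refl _ M => P_refl M
  | lift_step _ M m Hr => P_step M m Hr
  | lift_sum _ l ms n HF HP =>
      P_sum l ms n
        ((fix F l ms (HF : Forall2 (fun pM mi => lift r (dirac (snd pM)) mi) l ms) :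
              Forall2 (fun pM mi => lift r (dirac (snd pM)) mi /\ P (dirac (snd pM)) mi) l ms :=
            match HF in Forall2 _ l ms return
              Forall2 (fun pM mi => lift r (dirac (snd pM)) mi /\ P (dirac (snd pM)) mi) l ms with
            | Forall2_nil _ => Forall2_nil _
            | Forall2_cons x y Hxy Hrest =>
                Forall2_cons x y (conj Hxy (lift_ind_nested _ _ Hxy)) (F _ _ Hrest)
            end) l ms HF) HP
  end.
End LiftInd.

Lemma lift_flat_iff r l n : lift r l n <-> lift_flat r l n.
Proof.
  split.
  - revert l n. apply lift_ind_nested.
    + intros M. exists [dirac M]. split; [constructor; [left | constructor]; auto |].
      unfold mix; simpl. rewrite Rmult_1_r. apply Permutation_refl.
    + intros M m H. exists [m]. split; [constructor; [right | constructor]; auto |].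
      unfold mix; simpl. rewrite scale_1, app_nil_r. apply Permutation_refl.
    + intros l ms n HF HP.
      assert (exists ms', Forall2 (fun pM mi => refl_step r (snd pM) mi) l ms' /\
                          Forall2 (@Permutation _) ms ms') as [ms' [H1 H2]].
      { clear HP. induction HF as [|x y l' ms0 [_ [ms1 [Hb Hp]]] Hr IH].
        - exists []; split; constructor.
        - destruct IH as [ms' [H1 H2]].
          inversion Hb as [|x1 y1 l1 l1' Hb1 Hb2]; subst. inversion Hb2; subst.
          exists (y1 :: ms'). split; constructor; auto.
          unfold mix in Hp; simpl in Hp. rewrite scale_1, app_nil_r in Hp. auto. }
      exists ms'. split; auto.
      eapply Permutation_trans; [exact HP |].
      apply mix_perm; auto. eapply Forall2_length; eauto.
  - intros [ms [HF HP]]. apply lift_sum with ms; auto.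
    clear HP. induction HF as [|x y l ms [E|H]]; constructor; subst; auto;
      [apply lift_refl | apply lift_step; auto].
Qed.

Lemma lift_perm r a b : Permutation a b -> lift r a b.
Proof.
  intros P. apply lift_flat_iff. exists (map (fun pM => dirac (snd pM)) a).
  rewrite mix_dirac. split; [| apply Permutation_sym; auto].
  clear P. induction a; constructor; auto. left; auto.
Qed.

Lemma lift_reflexive r a : lift r a a.
Proof. apply lift_perm, Permutation_refl. Qed.

Lemma lift_app r a a' b b' : lift r a a' -> lift r b b' -> lift r (a ++ b) (a' ++ b').
Proof.
  rewrite !lift_flat_iff. intros [ms1 [H1 P1]] [ms2 [H2 P2]]. exists (ms1 ++ ms2). split.
  - apply Forall2_app; auto.
  - rewrite mix_app by (eapply Forall2_length; eauto). apply Permutation_app; auto.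
Qed.

Lemma lift_scale r p a a' : lift r a a' -> lift r (scale p a) (scale p a').
Proof.
  rewrite !lift_flat_iff. intros [ms [H1 P1]]. exists ms. split.
  - clear P1. induction H1; simpl; constructor; auto.
  - rewrite mix_scale. apply Permutation_map; auto.
Qed.

Lemma lift_mono (r r' : term -> mdist -> Prop) : (forall M m, r M m -> r' M m) ->
  forall a b, lift r a b -> lift r' a b.
Proof.
  intros Hr a b. rewrite !lift_flat_iff. intros [ms [H1 H2]]. exists ms. split; auto.
  eapply Forall2_impl; [| exact H1]. intros x y [E|E]; [left | right]; auto.
Qed.

Lemma star_lift_app r a a' b b' : star (lift r) a a' -> star (lift r) b b' ->
  star (lift r) (a ++ b) (a' ++ b').
Proof.
  intros Ha Hb. apply star_trans with (a' ++ b).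
  - apply (star_map (lift r) (lift r) (fun x => x ++ b)); auto. intros. apply lift_app; auto using lift_reflexive.
  - apply (star_map (lift r) (lift r) (fun x => a' ++ x)); auto. intros. apply lift_app; auto using lift_reflexive.
Qed.

Lemma star_lift_scale r p a a' : star (lift r) a a' -> star (lift r) (scale p a) (scale p a').
Proof. apply star_map. intros. apply lift_scale; auto. Qed.

Lemma star_lift_mix r l ms :
  Forall2 (fun pM m => star (lift r) (dirac (snd pM)) m) l ms -> star (lift r) l (mix l ms).
Proof.
  induction 1 as [|[p M] m l ms H _ IH]; [constructor |].
  rewrite mix_cons. change ((p, M) :: l) with ([(p, M)] ++ l).
  apply star_lift_app; auto. rewrite <- scale_dirac. apply star_lift_scale; auto.
Qed.

Lemma star_lift_mono (r r' : term -> mdist -> Prop) : (forall M m, r M m -> r' M m) ->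
  forall a b, star (lift r) a b -> star (lift r') a b.
Proof. intros Hr. apply star_map. apply lift_mono; auto. Qed.

Definition pointwise (Rt : term -> term -> Prop) (f s : mdist) : Prop :=
  Forall2 (fun a b => fst a = fst b /\ Rt (snd a) (snd b)) f s.

Lemma pointwise_refl (Rt : term -> term -> Prop) : (forall x, Rt x x) -> forall a, pointwise Rt a a.
Proof. intros H a; induction a; constructor; auto. Qed.

Lemma pointwise_dirac (Rt : term -> term -> Prop) t u : Rt t u -> pointwise Rt (dirac t) (dirac u).
Proof. repeat constructor; auto. Qed.

Lemma pointwise_scale Rt p a b : pointwise Rt a b -> pointwise Rt (scale p a) (scale p b).
Proof. induction 1 as [|x y a b [E H]]; simpl; constructor; simpl; auto. rewrite E; auto. Qed.

Lemma pointwise_comp (R1 R2 R3 : term -> term -> Prop) :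
  (forall x y z, R1 x y -> R2 y z -> R3 x z) ->
  forall a b c, pointwise R1 a b -> pointwise R2 b c -> pointwise R3 a c.
Proof.
  intros H a b c F1. revert c. induction F1 as [|x y a b [E1 H1] _ IH]; intros c F2;
    inversion F2 as [|? z ? c' [E2 H2] F2']; subst; constructor.
  - split; [congruence | eauto].
  - apply IH, F2'.
Qed.

Lemma pointwise_lift_sim (R R' : term -> term -> Prop) (rr rE : term -> mdist -> Prop) f s s' :
  pointwise R f s -> lift rr s s' ->
  (forall t u n, R t u -> refl_step rr u n ->
     exists g, star (lift rE) (dirac t) g /\ pointwise R' g n) ->
  exists f', star (lift rE) f f' /\ pointwise R' f' s'.
Proof.
  intros HF [ms [Hb HP]]%lift_flat_iff HE.
  assert (exists gs, Forall2 (fun pM g => star (lift rE) (dirac (snd pM)) g) f gs /\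
                     pointwise R' (mix f gs) (mix s ms)) as [gs [G1 G2]].
  { clear HP. revert ms Hb. induction HF as [|a b f s [Hab HR] HF IH]; intros ms Hb;
      inversion Hb as [|x y l l' Hxy Hr]; subst.
    - exists []; split; constructor.
    - destruct (IH _ Hr) as [gs [G1 G2]].
      destruct (HE _ _ _ HR Hxy) as [g [Sg Fg]].
      exists (g :: gs). split; [constructor; auto |].
      rewrite !mix_cons, Hab. apply Forall2_app; auto. apply pointwise_scale; auto. }
  destruct (Permutation_Forall2 (Permutation_sym HP) (Forall2_flip G2)) as [f' [Pf Ff]].
  exists f'. split.
  - eapply star_trans; [apply star_lift_mix; eauto |]. apply clos_rt1n_step, lift_perm; auto.
  - exact (Forall2_flip Ff).
Qed.

(** * Simulating ⇒ by ⇒_E *)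

Lemma star_wred_sstep M N : star wred M N -> star (lift sstep) (dirac M) (dirac N).
Proof.
  apply (star_map _ _ dirac). intros. apply lift_step, sstep_iff. eauto.
Qed.

Lemma ipar_sstep_sim t u n : ipar t u -> refl_step sstep u n ->
  exists g, star (lift sstep) (dirac t) g /\ pointwise ipar g n.
Proof.
  intros P [->|[[a1 [b1 [O ->]]]|[u' [W ->]]]%sstep_iff].
  - exists (dirac t). split; [constructor | apply pointwise_dirac; auto].
  - destruct (wchoice_ipar _ _ _ O _ P) as [a [b [Ot [Pa Pb]]]].
    destruct (split_par _ _ Pa) as [La [Sa Qa]].
    destruct (split_par _ _ Pb) as [Lb [Sb Qb]].
    exists [(1/2, La); (1/2, Lb)]. split; [| repeat constructor; auto].
    econstructor; [apply lift_step, sstep_iff; left; exists a, b; split; eauto |].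
    apply (star_lift_app _ [(1/2, a)] [(1/2, La)] [(1/2, b)] [(1/2, Lb)]);
      rewrite <- !scale_dirac; apply star_lift_scale, star_wred_sstep; auto.
  - destruct (ipar_wred_postpone _ _ (clos_rt1n_step _ _ _ _ W) _ P) as [t' [S1 P1]].
    exists (dirac t'). split; [apply star_wred_sstep; auto | apply pointwise_dirac; auto].
Qed.

Lemma pointwise_ipar_sstep_sim c c' : star (lift sstep) c c' ->
  forall f, pointwise ipar f c -> exists f', star (lift sstep) f f' /\ pointwise ipar f' c'.
Proof.
  induction 1 as [c| c c1 c' H _ IH]; intros f F.
  - exists f; split; [constructor | auto].
  - destruct (pointwise_lift_sim _ _ _ _ _ _ _ F H ipar_sstep_sim) as [f1 [S1 F1]].
    destruct (IH _ F1) as [f' [S2 F2]].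
    exists f'; split; eauto using star_trans.
Qed.

Lemma step_sstep_sim u n : refl_step step u n ->
  exists g, star (lift sstep) (dirac u) g /\ pointwise (star ipar) g n.
Proof.
  intros [->|[[u' [Hb ->]]%step_beta_iff | S]].
  - exists (dirac u). split; [constructor | apply pointwise_dirac; constructor].
  - destruct (bred_weak_or_internal _ _ Hb) as [W|P].
    + exists (dirac u'). split; [| apply pointwise_dirac; constructor].
      apply clos_rt1n_step, lift_step, sstep_iff. eauto.
    + exists (dirac u). split; [constructor | apply pointwise_dirac, clos_rt1n_step; auto].
  - exists n. split; [apply clos_rt1n_step, lift_step; left; auto |].
    apply pointwise_refl. constructor.
Qed.

Lemma star_ipar_step_sim t u n : star ipar t u -> refl_step step u n ->
  exists g, star (lift sstep) (dirac t) g /\ pointwise (star ipar) g n.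
Proof.
  induction 1 as [u| t y u P _ IH]; intros Hs; [apply step_sstep_sim; auto |].
  destruct (IH Hs) as [g1 [S1 F1]].
  destruct (pointwise_ipar_sstep_sim _ _ S1 (dirac t)) as [g [S F]];
    [apply pointwise_dirac; auto |].
  exists g. split; auto. eapply pointwise_comp; eauto. intros; econstructor; eauto.
Qed.

Definition sync (a b : term) : Prop := star ipar a b /\ (normal b -> a = b).

Lemma normalize_sync f s : pointwise (star ipar) f s ->
  exists f', star RstepsE f f' /\ pointwise sync f' s.
Proof.
  intros F.
  apply (pointwise_lift_sim _ _ (fun _ _ => False) stepE f s s F (lift_reflexive _ _)).
  intros t u n St [->|[]].
  destruct (excluded_middle_informative (normal u)) as [Hn|Hn].
  - exists (dirac u). split; [| apply pointwise_dirac; split; [constructor | auto]].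
    apply (star_map (fun a b => snf a /\ stepU a b) _ dirac); [| apply star_ipar_normal_stepU; auto].
    intros a b [Ha HU]. apply lift_step, E_u; auto. apply snormal_iff; auto.
  - exists (dirac t). split; [constructor | apply pointwise_dirac; split; tauto].
Qed.

Lemma sync_Rsteps_sim f s s' : pointwise sync f s -> Rsteps s s' ->
  exists f', star RstepsE f f' /\ pointwise sync f' s'.
Proof.
  intros F HR.
  assert (F0 : pointwise (star ipar) f s).
  { eapply Forall2_impl; [| exact F]. intros x y [E [H _]]; auto. }
  destruct (pointwise_lift_sim _ _ _ _ _ _ _ F0 HR star_ipar_step_sim) as [f1 [S1 F1]].
  destruct (normalize_sync _ _ F1) as [f2 [S2 F2]].
  exists f2; split; auto. eapply star_trans; [| exact S2].
  eapply star_lift_mono; [| exact S1]. apply sstep_stepE.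
Qed.

Lemma weight_app a b N : weight_of (a ++ b) N = weight_of a N + weight_of b N.
Proof.
  induction a as [|[p M] a IH]; simpl; [lra |].
  destruct (term_eq_dec M N); rewrite IH; lra.
Qed.

Lemma weight_scale p a N : weight_of (scale p a) N = p * weight_of a N.
Proof.
  induction a as [|[q M] a IH]; simpl; [lra |].
  destruct (term_eq_dec M N); rewrite IH; lra.
Qed.

Lemma weight_perm a b N : Permutation a b -> weight_of a N = weight_of b N.
Proof.
  induction 1; simpl; auto; try congruence.
  - rewrite IHPermutation. auto.
  - destruct (term_eq_dec (snd x) N), (term_eq_dec (snd y) N); lra.
Qed.

Definition nonneg (m : mdist) : Prop := Forall (fun pM => 0 <= fst pM) m.

Lemma weight_nonneg a N : nonneg a -> 0 <= weight_of a N.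
Proof. induction 1; simpl; [lra |]. destruct (term_eq_dec (snd x) N); lra. Qed.

Lemma stepE_nonneg M m : stepE M m -> nonneg m.
Proof.
  destruct 1 as [M m _ [[a [b [_ ->]]]|[N [_ ->]]]%sstep_iff | M N _ _];
    repeat constructor; simpl; lra.
Qed.

Lemma refl_stepE_nonneg M m : refl_step stepE M m -> nonneg m.
Proof. intros [->|H]; [repeat constructor; simpl; lra | eapply stepE_nonneg; eauto]. Qed.

(* No ⇒_E-step leaves a normal form. *)
Lemma refl_stepE_weight M m N : refl_step stepE M m -> normal N ->
  (if term_eq_dec M N then 1 else 0) <= weight_of m N.
Proof.
  intros [->|H] HN; simpl; destruct (term_eq_dec M N) as [->|]; try lra.
  - exfalso. apply (HN m), stepE_step; auto.
  - apply weight_nonneg. eapply stepE_nonneg; eauto.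
Qed.

Lemma RstepsE_nonneg a b : RstepsE a b -> nonneg a -> nonneg b.
Proof.
  intros [ms [Hb HP]]%lift_flat_iff Ha.
  eapply Permutation_Forall; [apply Permutation_sym; eauto |]. clear HP.
  induction Hb as [|[p M] mi a ms HB _ IH]; [constructor |].
  inversion Ha as [|? ? Hp Ha']; subst. rewrite mix_cons.
  apply Forall_app; split; auto.
  apply Forall_map. eapply Forall_impl; [| apply (refl_stepE_nonneg _ _ HB)].
  intros [q N] Hq. simpl in *. apply Rmult_le_pos; auto.
Qed.

Lemma RstepsE_weight_mono a b N : RstepsE a b -> nonneg a -> normal N ->
  weight_of a N <= weight_of b N.
Proof.
  intros [ms [Hb HP]]%lift_flat_iff Ha HN.
  rewrite (weight_perm _ _ N HP). clear HP.
  induction Hb as [|[p M] mi a ms HB _ IH]; simpl; [lra |].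
  inversion Ha as [|? ? Hp Ha']; subst. simpl in Hp.
  rewrite mix_cons, weight_app, weight_scale. simpl fst.
  pose proof (refl_stepE_weight _ _ N HB HN) as Hmi. simpl in Hmi.
  specialize (IH Ha'). destruct (term_eq_dec M N); nra.
Qed.

Lemma star_RstepsE_obs_mono a b N : star RstepsE a b -> nonneg a ->
  obs_Nnf a N <= obs_Nnf b N.
Proof.
  unfold obs_Nnf. destruct (excluded_middle_informative (normal N)); [| lra].
  induction 1 as [| a c b H _ IH]; intros Ha; [lra |].
  eapply Rle_trans; [apply RstepsE_weight_mono | apply IH]; eauto using RstepsE_nonneg.
Qed.

Lemma sync_obs f s N : pointwise sync f s -> obs_Nnf f N = obs_Nnf s N.
Proof.
  unfold obs_Nnf. destruct (excluded_middle_informative (normal N)) as [HN|]; auto.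
  induction 1 as [|[p t] [q u] f s [E [S1 S2]] _ IH]; simpl in *; auto.
  subst. rewrite IH.
  destruct (term_eq_dec u N) as [->|Hu].
  - rewrite (S2 HN). destruct (term_eq_dec N N); congruence.
  - destruct (term_eq_dec t N) as [->|]; auto.
    exfalso. apply Hu, (star_ipar_bnf _ _ S1), normal_bnf, HN.
Qed.

Fixpoint nsteps {A} (R : relation A) (j : nat) (a b : A) : Prop :=
  match j with
  | O => a = b
  | S j' => exists c, R a c /\ nsteps R j' c b
  end.

Lemma star_nsteps {A} (R : relation A) a b : star R a b -> exists j, nsteps R j a b.
Proof. induction 1 as [| a c b H _ [j Hj]]; [exists O | exists (S j)]; simpl; eauto. Qed.

Lemma nsteps_star {A} (R : relation A) j a b : nsteps R j a b -> star R a b.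
Proof.
  revert a; induction j; simpl; intros a H; [subst; constructor |].
  destruct H as [c [H1 H2]]. econstructor; eauto.
Qed.

Section Interleave.
Variables (A B : Type) (Ra : relation A) (Sync : A -> B -> Prop) (s : nat -> B).
Hypothesis Ra_refl : forall a, Ra a a.
Hypothesis sim : forall k a, Sync a (s k) -> exists a', star Ra a a' /\ Sync a' (s (S k)).

(* The current element is [gap] steps away from one synchronized with [s target]. *)
Record phase := Phase { cur : A; target : nat; gap : nat }.

Definition ahead (x : phase) : Prop :=
  exists f, nsteps Ra (gap x) (cur x) f /\ Sync f (s (target x)).

Definition advance (x y : phase) : Prop :=
  Ra (cur x) (cur y) /\ ahead y /\
  ((gap x = S (gap y) /\ target y = target x) \/ (gap x = O /\ target y = S (target x))).

Lemma advance_exists x : ahead x -> exists y, advance x y.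
Proof.
  destruct x as [a k [|j]]; intros [f [Hj HS]]; simpl in *.
  - subst f. destruct (sim _ _ HS) as [f' [Sf Ff]].
    destruct (star_nsteps _ _ _ Sf) as [j' Hj'].
    exists (Phase a (S k) j'). repeat split; [| exists f' |]; simpl; eauto.
  - destruct Hj as [c [Hc Hcf]]. exists (Phase c k j). repeat split; [| exists f |]; simpl; eauto.
Qed.

Variable a0 : A.
Hypothesis sync0 : Sync a0 (s O).

Fixpoint phases (n : nat) : phase :=
  match n with
  | O => Phase a0 O O
  | S n => epsilon (inhabits (Phase a0 O O)) (advance (phases n))
  end.

Lemma phases_advance n : ahead (phases n) /\ advance (phases n) (phases (S n)).
Proof.
  assert (Hnext : forall m, ahead (phases m) -> advance (phases m) (phases (S m))).
  { intros m Hm. exact (epsilon_spec _ (advance (phases m)) (advance_exists _ Hm)). }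
  induction n as [|n [_ [_ [H _]]]]; auto.
  assert (H : ahead (phases O)) by (exists a0; simpl; auto). auto.
Qed.

Lemma phases_gap_run i n : gap (phases n) = i ->
  gap (phases (n + i)) = O /\ target (phases (n + i)) = target (phases n).
Proof.
  revert n; induction i as [|i IH]; intros n Hn; [rewrite Nat.add_0_r; auto |].
  destruct (phases_advance n) as [_ [_ [_ [[Hg Ht]|[Hg _]]]]]; [| congruence].
  rewrite Hn in Hg. injection Hg as Hg.
  replace (n + S i)%nat with (S n + i)%nat by lia.
  destruct (IH (S n)) as [H1 H2]; auto. split; congruence.
Qed.

Lemma phases_reach k : exists n, target (phases n) = k /\ gap (phases n) = O.
Proof.
  induction k as [|k [n [Hk Hg]]]; [exists O; auto |].
  destruct (phases_advance n) as [_ [_ [_ [[Hg' _]|[_ Ht]]]]]; [congruence |].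
  destruct (phases_gap_run _ (S n) eq_refl) as [H1 H2].
  exists (S n + gap (phases (S n)))%nat. split; congruence.
Qed.

Lemma interleave : exists e : nat -> A,
  e O = a0 /\ (forall n, Ra (e n) (e (S n))) /\
  (forall n, exists k f, star Ra (e n) f /\ Sync f (s k)) /\
  (forall k, exists n, Sync (e n) (s k)).
Proof.
  exists (fun n => cur (phases n)). repeat split; auto.
  - intros n. apply phases_advance.
  - intros n. destruct (phases_advance n) as [[f [Hf HS]] _].
    exists (target (phases n)), f. eauto using nsteps_star.
  - intros k. destruct (phases_reach k) as [n [Hk Hg]].
    destruct (phases_advance n) as [[f [Hf HS]] _]. rewrite Hg in Hf. simpl in Hf.
    exists n. congruence.
Qed.

End Interleave.

Lemma is_lub_cofinal (u v : nat -> R) l :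
  (forall n, exists k, u n <= v k) -> (forall k, exists n, v k <= u n) ->
  is_lub (fun x => exists k, x = v k) l -> is_lub (fun x => exists n, x = u n) l.
Proof.
  intros Huv Hvu [Hub Hleast]. split.
  - intros x [n ->]. destruct (Huv n) as [k Hk]. eapply Rle_trans; eauto.
  - intros b Hb. apply Hleast. intros x [k ->]. destruct (Hvu k) as [n Hn].
    eapply Rle_trans; eauto.
Qed.

Theorem mainTheorem8 :
  forall (m : mdist) (r : term -> R),
    is_mdist m -> subdist r ->
    obs_lim Rsteps m r -> obs_lim RstepsE m r.
Proof.
  intros m r [Hm _] _ [s [[Hs0 Hmax] Hlub]].
  assert (HS : forall n, Rsteps (s n) (s (S n))).
  { destruct Hmax as [H|[k [_ [Hk _]]]]; auto.
    exfalso. apply (Hk (s k)), lift_reflexive. }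
  assert (Hsync0 : pointwise sync m (s O)).
  { rewrite Hs0. apply pointwise_refl. split; [constructor | auto]. }
  destruct (interleave _ _ RstepsE (pointwise sync) s (lift_reflexive _)
              (fun k f Hf => sync_Rsteps_sim _ _ _ Hf (HS k)) m Hsync0)
    as [e [He0 [He [Hbelow Hcofinal]]]].
  assert (Hnonneg : forall n, nonneg (e n)).
  { induction n; [rewrite He0; eapply Forall_impl; [| exact Hm]; intros; simpl; lra |].
    eapply RstepsE_nonneg; eauto. }
  exists e. split; [split; auto |].
  intros N. apply (is_lub_cofinal _ (fun k => obs_Nnf (s k) N)); auto.
  - intros n. destruct (Hbelow n) as [k [f [Hf Hsync]]]. exists k.
    rewrite <- (sync_obs _ _ N Hsync). apply star_RstepsE_obs_mono; auto.
  - intros k. destruct (Hcofinal k) as [n Hn]. exists n.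
    rewrite (sync_obs _ _ N Hn). lra.
Qed.
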